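(* The scheme-theoretic image of the morphism $\pi:\mathscr E\to\mathscr L$ coincides with the variety of X-states $\mathscr X$.
   Context: Let $V_1,\dots,V_n$ be two-dimensional complex vector spaces, $\mathscr V_i=\mathfrak{sl}(V_i)$ with form $\langle A,B\rangle=\tfrac12\operatorname{tr}(AB)$, $\mathscr L$ the affine space of trace-one endomorphisms of $V_1\otimes\cdots\otimes V_n$, identified (Bloch model) with $\bigoplus_{\emptyset\ne I\subseteq\{1,\dots,n\}}\mathscr V_I$, $\mathscr V_I=\bigotimes_{i\in I}\mathscr V_i$, via $\rho=2^{-n}\mathrm{id}+\sum_I\rho_I$ (with $\mathscr V_I$ embedded in $\mathrm{End}(V_1\otimes\cdots\otimes V_n)$ by tensoring with identities). An X-state is a $\rho\in\mathscr L$ which for some ordered bases $\{e^i_0,e^i_1\}$ of the $V_i$ preserves the span of basis tensors $e^1_{\phi(1)}\otimes\cdots\otimes e^n_{\phi(n)}$ with $\sum\phi(i)$ even and the span of those with $\sum\phi(i)$ odd; $\mathscr X$ is the Zariski closure in $\mathscr L$ of the set of X-states with reduced structure. Let $\breve{\mathbb P}(\mathscr V_i)\subseteq\mathbb P(\mathscr V_i)$ be the open set of lines spanned by $v$ with $\langle v,v\rangle\neq0$, and $\breve P=\prod_i\breve{\mathbb P}(\mathscr V_i)$. For $\mathfrak B=(\mathscr V_1^\ell,\dots,\mathscr V_n^\ell)\in\breve P$ let $\mathscr V_i^t=(\mathscr V_i^\ell)^\perp$, let $\mathscr V_I^e$ be spanned by tensors $\bigotimes_{i\in I}x_i$ with each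 $x_i\in\mathscr V_i^\ell$ or $x_i\in\mathscr V_i^t$ and an even number transversal, and $X(\mathfrak B)=\bigoplus_{\emptyset\ne I}\mathscr V_I^e$. Let $\mathscr E\to\breve P$ be the vector bundle (a subbundle of the trivial bundle $\breve P\times\mathscr L$, namely the direct sum over pairs of disjoint $I,J$ with $I\cup J\ne\emptyset$, $|J|$ even, of the bundles with fibers $\bigotimes_{i\in I}\mathscr V_i^\ell\otimes\bigotimes_{j\in J}\mathscr V_j^t$) whose fiber over $\mathfrak B$ is $X(\mathfrak B)$, and $\pi:\mathscr E\to\mathscr L$ the morphism restricting on each fiber to the inclusion $X(\mathfrak B)\subseteq\mathscr L$. *)

From HB Require Import structures.
From mathcomp Require Import all_boot all_algebra.
From mathcomp Require Import reals complex.
From mathcomp Require mpoly.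

Set Implicit Arguments.
Unset Strict Implicit.
Unset Printing Implicit Defensive.
Import GRing.Theory.
Local Open Scope ring_scope.

Section XStates.
Variables (K : fieldType) (n : nat).

(* Basis labels phi : {1..n} -> {0,1} of the tensor basis
   e^1_{phi 1} (x) ... (x) e^n_{phi n} of V_1 (x) ... (x) V_n, V_i = K^2. *)
Definition idx := {ffun 'I_n -> 'I_2}.

(* Endomorphisms of V_1 (x) ... (x) V_n, as matrices indexed by idx. *)
Definition op := idx -> idx -> K.

Definition idop : op := fun phi psi => (phi == psi)%:R.

Definition trace (rho : op) : K := \sum_phi rho phi phi.

Definition in_L (rho : op) : Prop := trace rho = 1.

Definition tens (x : 'I_n -> 'M[K]_2) : op :=
  fun phi psi => \prod_i x i (phi i) (psi i).

Definition sl2 (A : 'M[K]_2) : Prop := \tr A = 0.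
Definition formB (A B : 'M[K]_2) : K := 2%:R^-1 * \tr (A *m B).

(* A point B = (V_1^l, ..., V_n^l) of P-breve, given by spanning vectors v i
   of the lines V_i^l, with v i in sl(V_i) and <v i, v i> <> 0. *)
Definition in_Pbreve (v : 'I_n -> 'M[K]_2) : Prop :=
  forall i, sl2 (v i) /\ formB (v i) (v i) <> 0.

Definition in_line (w x : 'M[K]_2) : Prop := exists c : K, x = c *: w.
Definition in_transv (w x : 'M[K]_2) : Prop := sl2 x /\ formB w x = 0.

(* Spanning tensors of X(B) = (+)_{I nonempty} V_I^e, embedded in End(V) by
   tensoring with identities: I nonempty, J subset I the transversal factors,
   |J| even, x_i in V_i^l for i in I\J, x_i in V_i^t for i in J, x_i = id
   for i outside I. *)
Definition X_generator (v : 'I_n -> 'M[K]_2) (y : op) : Prop :=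
  exists (I J : {set 'I_n}) (x : 'I_n -> 'M[K]_2),
    I != set0 /\ J \subset I /\ ~~ odd #|J| /\
    (forall i, i \in I :\: J -> in_line (v i) (x i)) /\
    (forall i, i \in J -> in_transv (v i) (x i)) /\
    (forall i, i \notin I -> x i = 1%:M) /\
    y = tens x.

(* The fibre X(B) of E over B, viewed inside L via the Bloch model
   rho = 2^{-n} id + sum_I rho_I: i.e. the set 2^{-n} id + span(generators). *)
Definition X_fiber (v : 'I_n -> 'M[K]_2) (rho : op) : Prop :=
  exists (m : nat) (c : 'I_m -> K) (g : 'I_m -> op),
    (forall k, X_generator v (g k)) /\
    forall phi psi,
      rho phi psi = (2 ^ n)%:R^-1 * idop phi psi + \sum_k c k * g k phi psi.

Definition pi_image (rho : op) : Prop :=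
  exists v, in_Pbreve v /\ X_fiber v rho.

Definition parity (phi : idx) : bool := odd (\sum_i (phi i : nat)).

(* Basis tensor f_psi = e^1_{psi 1} (x) ... (x) e^n_{psi n}, where e^i_j is
   the j-th column of the invertible matrix B i. *)
Definition basis_tensor (B : 'I_n -> 'M[K]_2) (psi : idx) : idx -> K :=
  fun chi => \prod_i B i (chi i) (psi i).

Definition apply_op (rho : op) (f : idx -> K) : idx -> K :=
  fun chi => \sum_chi' rho chi chi' * f chi'.

Definition Xstate (rho : op) : Prop :=
  in_L rho /\
  exists B : 'I_n -> 'M[K]_2,
    (forall i, B i \in unitmx) /\
    forall psi, exists c : idx -> K,
      (forall phi, parity phi != parity psi -> c phi = 0) /\
      apply_op rho (basis_tensor B psi) =1
        (fun chi => \sum_phi c phi * basis_tensor B phi chi).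

(* Polynomial functions on the ambient coordinate space End(V) (coordinates
   = matrix entries, enumerated by enum_val). *)
Definition ncoords := #|{: idx * idx}|.
Definition coords (rho : op) : 'I_ncoords -> K :=
  fun k => rho (enum_val k).1 (enum_val k).2.

Definition vanishing_ideal (S : op -> Prop) (f : mpoly.mpoly ncoords K) : Prop :=
  forall rho, S rho -> mpoly.meval (coords rho) f = 0.

(* The ideal of the scheme-theoretic image of pi (E is reduced, so this is
   the kernel of pi^* : functions on L -> functions on E). *)
Definition scheme_image_ideal := vanishing_ideal pi_image.
(* The ideal of X = Zariski closure of X-states with reduced structure. *)
Definition Xvariety_ideal := vanishing_ideal Xstate.

End XStates.

(* The two ideals agree because the image of pi and the set of X-states coincide
   pointwise.  A traceless v with <v, v> <> 0 is diagonalizable, B^-1 v B = l Z with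
   l <> 0 and Z = diag(1, -1); in the eigenbasis B the line V^l is diagonal while V^t
   consists of matrices with zero diagonal, so a tensor with an even number of
   transversal factors maps basis tensors of one parity to the same parity, and the
   trace-one condition accounts for the term 2^-n id.  Conversely, if rho preserves
   parity in the bases B_i, take V_i^l spanned by B_i Z B_i^-1.  Then rho is a
   combination of the tensors of B_i E_{phi_i psi_i} B_i^-1 with parity phi =
   parity psi; each B E_aa B^-1 = (1 +- v)/2 lies in K id + V^l and each B E_ab B^-1
   with a <> b lies in V^t, so expanding the tensor products puts rho in
   K id + X(B), and taking traces fixes the coefficient of id to 2^-n. *)

From Pilot Require Import Defs.
From mathcomp Require Import all_boot all_algebra.
From mathcomp Require Import reals complex.
From mathcomp Require mpoly.
From mathcomp Require Import ring.

Set Implicit Arguments.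
Unset Strict Implicit.
Unset Printing Implicit Defensive.
Import GRing.Theory Num.Theory.
Local Open Scope ring_scope.

Section Span.
Variables (K : fieldType) (V : lmodType K) (S : V -> Prop).

Definition in_span (x : V) : Prop :=
  exists m (c : 'I_m -> K) (g : 'I_m -> V),
    (forall k, S (g k)) /\ x = \sum_k c k *: g k.

Lemma in_span0 : in_span 0.
Proof. by exists 0%N, (fun _ => 0), (fun _ => 0); split=> [[]//|]; rewrite big_ord0. Qed.

Lemma in_span_mem x : S x -> in_span x.
Proof. by exists 1%N, (fun _ => 1), (fun _ => x); rewrite big_ord1 scale1r. Qed.

Lemma in_spanZ a x : in_span x -> in_span (a *: x).
Proof.
case=> m [c [g [Sg ->]]]; exists m, (fun k => a * c k), g; split=> //.
by rewrite scaler_sumr; apply: eq_bigr => k _; rewrite scalerA.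
Qed.

Lemma in_spanD x y : in_span x -> in_span y -> in_span (x + y).
Proof.
case=> [m1 [c1 [g1 [Sg1 ->]]]] [m2 [c2 [g2 [Sg2 ->]]]].
pose join T (f1 : 'I_m1 -> T) (f2 : 'I_m2 -> T) k :=
  match split k with inl k1 => f1 k1 | inr k2 => f2 k2 end.
exists (m1 + m2)%N, (join _ c1 c2), (join _ g1 g2); split.
  by move=> k; rewrite /join; case: (split k).
rewrite big_split_ord /join; congr (_ + _); apply: eq_bigr => k _.
  by rewrite (unsplitK (inl k)).
by rewrite (unsplitK (inr k)).
Qed.

Lemma in_span_sum (I : Type) (r : seq I) (P : pred I) (F : I -> V) :
  (forall i, P i -> in_span (F i)) -> in_span (\sum_(i <- r | P i) F i).
Proof. by move=> spanF; elim/big_ind: _ => //; [apply: in_span0 | apply: in_spanD]. Qed.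

Lemma in_span_ind (P : V -> Prop) :
  P 0 -> (forall a x y, P x -> P y -> P (a *: x + y)) -> (forall x, S x -> P x) ->
  forall x, in_span x -> P x.
Proof.
move=> P0 PZD PS _ [m [c [g [Sg ->]]]].
have PD x y : P x -> P y -> P (x + y) by move=> Px Py; rewrite -[x]scale1r; apply: PZD.
apply: (big_ind P) => // k _.
by have := PZD (c k) _ _ (PS _ (Sg k)) P0; rewrite addr0.
Qed.

End Span.

Lemma in_span_adjoin (K : fieldType) (V : lmodType K) (S : V -> Prop) (e y : V) :
  in_span (fun x => S x \/ x = e) y -> exists s, in_span S (y - s *: e).
Proof.
move: y; apply: in_span_ind.
- by exists 0; rewrite scale0r subr0; apply: in_span0.
- move=> a x y [s1 Sx] [s2 Sy]; exists (a * s1 + s2).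
  have -> : a *: x + y - (a * s1 + s2) *: e = a *: (x - s1 *: e) + (y - s2 *: e).
    by rewrite scalerDl -scalerA scalerBr opprD addrACA.
  by apply: in_spanD => //; apply: in_spanZ.
- move=> x [Sx | ->]; first by exists 0; rewrite scale0r subr0; apply: in_span_mem.
  by exists 1; rewrite scale1r subrr; apply: in_span0.
Qed.

Lemma mxtrace_in_span (K : fieldType) m (S : 'M[K]_m -> Prop) M :
  (forall A, S A -> \tr A = 0) -> in_span S M -> \tr M = 0.
Proof.
move=> trS; move: M; apply: in_span_ind => [|a A1 A2 tr1 tr2|//]; first exact: mxtrace0.
by rewrite mxtraceD mxtraceZ tr1 tr2 mulr0 addr0.
Qed.

Lemma ord2P (i : 'I_2) : i = ord0 \/ i = ord_max.
Proof. by case: i => [[|[|//]]] ?; [left | right]; apply: val_inj. Qed.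

Lemma big_ord2 (V : nmodType) (F : 'I_2 -> V) : \sum_(k < 2) F k = F ord0 + F ord_max.
Proof. by rewrite big_ord_recl big_ord1; congr (_ + F _); apply: val_inj. Qed.

Section TwoByTwo.
Variable K : fieldType.
Implicit Types A B : 'M[K]_2.

Definition pauliZ : 'M[K]_2 := diag_mx (\row_(i < 2) (-1) ^+ i).

Lemma mxtrace2 A : \tr A = A ord0 ord0 + A ord_max ord_max.
Proof. exact: big_ord2. Qed.

Lemma mxtrace_pauliZ : \tr pauliZ = 0.
Proof. by rewrite mxtrace2 !mxE /= expr0 expr1 !mulr1n subrr. Qed.

Lemma mxtrace_pauliZ_mul A : \tr (pauliZ *m A) = A ord0 ord0 - A ord_max ord_max.
Proof. by rewrite mul_diag_mx mxtrace2 !mxE /= expr0 expr1 mul1r mulN1r. Qed.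

Lemma pauliZ_sqr : pauliZ *m pauliZ = 1%:M.
Proof.
apply/matrixP => i j; rewrite mul_diag_mx !mxE.
by case: eqP => _; rewrite ?mulr0n ?mulr0 // mulr1n -expr2 sqrr_sign.
Qed.

Lemma mxtrace_conj A B C : C *m B = 1%:M -> \tr (B *m A *m C) = \tr A.
Proof. by move=> CB; rewrite mxtrace_mulC mulmxA CB mul1mx. Qed.

Lemma delta_mx_hollow (a b k : 'I_2) : a != b -> delta_mx a b k k = 0 :> K.
Proof. by move=> /negbTE neq; rewrite mxE; case: eqP => [-> | _]; rewrite ?neq. Qed.

Hypothesis two_neq0 : 2%:R != 0 :> K.

Lemma diag_eq0_of_mxtrace A : \tr A = 0 -> \tr (pauliZ *m A) = 0 -> forall k, A k k = 0.
Proof.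
rewrite mxtrace_pauliZ_mul mxtrace2 => sum0 diff0.
have a00 : A ord0 ord0 = 0.
  have : 2%:R * A ord0 ord0 =
      (A ord0 ord0 + A ord_max ord_max) + (A ord0 ord0 - A ord_max ord_max) by ring.
  by rewrite sum0 diff0 addr0 => /eqP; rewrite mulf_eq0 (negbTE two_neq0) => /eqP.
by move=> k; case: (ord2P k) => -> //; rewrite -[RHS]sum0 a00 add0r.
Qed.

(* E_aa = (1 + (-1)^a Z) / 2, while E_ab with a <> b is kept. *)
Definition elem_coef (a b k : 'I_2) : K :=
  if k == ord0 then (a == b)%:R / 2%:R else if a == b then (-1) ^+ a / 2%:R else 1.

Definition elem_mx (a b k : 'I_2) : 'M[K]_2 :=
  if k == ord0 then 1%:M else if a == b then pauliZ else delta_mx a b.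

Lemma delta_mx_decomp a b : delta_mx a b = \sum_k elem_coef a b k *: elem_mx a b k.
Proof.
rewrite big_ord2 /elem_coef /elem_mx /=; apply/matrixP => i j; rewrite !mxE.
by case: (ord2P a) => ->; case: (ord2P b) => ->; case: (ord2P i) => ->;
  case: (ord2P j) => ->; rewrite /= !mxE /= ?expr0 ?expr1; field.
Qed.

End TwoByTwo.

Arguments pauliZ {K}.
Arguments elem_coef {K}.
Arguments elem_mx {K}.

Lemma exists_sqrt_shift_neq0 (K : numClosedFieldType) (p d : K) : d != 0 ->
  exists l, [/\ l ^+ 2 = d, l != 0 & l + p != 0].
Proof.
move=> d_neq0; have s_neq0 : sqrtC d != 0 by rewrite sqrtC_eq0.
have [sp0 | sp_neq0] := eqVneq (sqrtC d + p) 0; last by exists (sqrtC d); rewrite sqrtCK.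
exists (- sqrtC d); rewrite sqrrN sqrtCK oppr_eq0; split => //.
have -> : p = - sqrtC d by apply/eqP; rewrite -addr_eq0 addrC sp0.
by rewrite -opprD oppr_eq0 -mulr2n mulrn_eq0.
Qed.

Lemma sl2_diagonalizable (K : numClosedFieldType) (w : 'M[K]_2) :
  \tr w = 0 -> \tr (w *m w) != 0 ->
  exists l (B : 'M[K]_2), [/\ l != 0, B \in unitmx & invmx B *m w *m B = l *: pauliZ].
Proof.
move=> tr0 trw2_neq0; set p := w ord0 ord0; set d := p ^+ 2 + w ord0 ord_max * w ord_max ord0.
have w11 : w ord_max ord_max = - p by apply/eqP; rewrite -addr_eq0 addrC -mxtrace2 tr0.
have wsq : w *m w = d%:M.
  apply/matrixP => i j; rewrite !mxE big_ord2.
  by case: (ord2P i) => ->; case: (ord2P j) => ->; rewrite /= ?w11 /d /p; ring.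
have anti : w *m pauliZ + pauliZ *m w = (2%:R * p)%:M.
  apply/matrixP => i j; rewrite !mxE !big_ord2 !mxE.
  by case: (ord2P i) => ->; case: (ord2P j) => ->; rewrite /= ?w11 ?expr0 ?expr1 /p; ring.
have d_neq0 : d != 0.
  by apply: contraNneq trw2_neq0 => d0; rewrite wsq d0 mxtrace_scalar mul0rn.
have [l [lsq l_neq0 lp_neq0]] := exists_sqrt_shift_neq0 p d_neq0.
(* w B = l B Z only needs w^2 = l^2, and B (Z w + l) = 2 l (l + p) makes B invertible. *)
pose B := w *m pauliZ + l%:M.
have wB : w *m B = l *: (B *m pauliZ).
  rewrite mulmxDr mulmxA wsq -lsq mul_scalar_mx mul_mx_scalar mulmxDl -mulmxA pauliZ_sqr.
  by rewrite mulmx1 mul_scalar_mx scalerDr scalerA -expr2 addrC.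
have BB' : B *m (pauliZ *m w + l%:M) = (2%:R * l * (l + p))%:M.
  have Zw : pauliZ *m w = (2%:R * p)%:M - w *m pauliZ.
    by rewrite -anti [_ + pauliZ *m w]addrC addrK.
  rewrite mulmxDr !mulmxDl -mulmxA (mulmxA pauliZ) pauliZ_sqr mul1mx wsq -lsq Zw.
  rewrite !mul_mx_scalar !mul_scalar_mx; apply/matrixP => i j; rewrite !mxE; ring.
have Bu : B \in unitmx.
  have c_neq0 : 2%:R * l * (l + p) != 0 by rewrite !mulf_neq0 // pnatr_eq0.
  apply: (proj1 (mulmx1_unit (B := (2%:R * l * (l + p))^-1 *: (pauliZ *m w + l%:M)) _)).
  by rewrite -scalemxAr BB' scale_scalar_mx mulVf.
exists l, B; split => //.
by rewrite -mulmxA wB -scalemxAr mulmxA mulVmx // mul1mx.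
Qed.

Section Operators.
Variables (K : fieldType) (n : nat).
Local Notation idx := (idx n).
Local Notation op := (op K n).
Local Notation N := #|{: idx}|.
Implicit Types (rho : op) (X Y : 'I_n -> 'M[K]_2).

Definition opmx rho : 'M[K]_N := \matrix_(i, j) rho (enum_val i) (enum_val j).

Lemma opmxE rho phi psi : opmx rho (enum_rank phi) (enum_rank psi) = rho phi psi.
Proof. by rewrite mxE !enum_rankK. Qed.

Lemma card_idx : N = (2 ^ n)%N.
Proof. by rewrite card_ffun !card_ord. Qed.

Lemma sum_enum_val (F : idx -> K) : \sum_(k < N) F (enum_val k) = \sum_phi F phi.
Proof. by rewrite -(big_enum_val F). Qed.

Lemma mxtrace_opmx rho : \tr (opmx rho) = trace rho.
Proof. by rewrite /trace -sum_enum_val; apply: eq_bigr => k _; rewrite mxE. Qed.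

Lemma opmx_mulmxE rho (M : 'M[K]_N) i j :
  (opmx rho *m M) i j = \sum_phi rho (enum_val i) phi * M (enum_rank phi) j.
Proof. by rewrite mxE -sum_enum_val; apply: eq_bigr => k _; rewrite mxE enum_valK. Qed.

Lemma opmx_tensM X Y : opmx (tens X) *m opmx (tens Y) = opmx (tens (fun i => X i *m Y i)).
Proof.
apply/matrixP => p q; rewrite opmx_mulmxE !mxE /tens.
under [RHS]eq_bigr do rewrite mxE.
rewrite bigA_distr_bigA; apply: eq_bigr => phi _.
by rewrite mxE enum_rankK big_split.
Qed.

Lemma eq_opmx_tens X Y : X =1 Y -> opmx (tens X) = opmx (tens Y).
Proof.
by move=> eqXY; apply/matrixP => i j; rewrite !mxE; apply: eq_bigr => l _; rewrite eqXY.
Qed.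

Lemma opmx_tens1 : opmx (tens (fun _ => 1%:M)) = 1%:M.
Proof.
apply/matrixP => i j; rewrite !mxE /tens.
have [<-|neq_ij] := eqVneq i j; first by apply: big1 => l _; rewrite mxE eqxx.
have [l neq_l] : exists l, enum_val i l != enum_val j l.
  apply/existsP; rewrite -negb_forall; apply: contra neq_ij => /forallP eq_ij.
  by apply/eqP/enum_val_inj/ffunP => l; apply/eqP.
by rewrite (bigD1 l) //= mxE (negbTE neq_l) mul0r.
Qed.

Lemma opmx_tens_invmx B : (forall i, B i \in unitmx) ->
  opmx (tens (fun i => invmx (B i))) *m opmx (tens B) = 1%:M.
Proof.
by move=> Bu; rewrite opmx_tensM -opmx_tens1; apply: eq_opmx_tens => i; rewrite mulVmx.
Qed.

Lemma mxtrace_opmx_tens X : \tr (opmx (tens X)) = \prod_i \tr (X i).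
Proof. by rewrite mxtrace_opmx /trace /tens bigA_distr_bigA. Qed.

Lemma opmx_tens_sum m (a : 'I_n -> 'I_m -> K) (M : 'I_n -> 'I_m -> 'M[K]_2) :
  opmx (tens (fun i => \sum_k a i k *: M i k)) =
  \sum_(F : {ffun 'I_n -> 'I_m}) (\prod_i a i (F i)) *: opmx (tens (fun i => M i (F i))).
Proof.
apply/matrixP => p q; rewrite summxE !mxE /tens.
under eq_bigr do rewrite summxE; under [RHS]eq_bigr do rewrite !mxE.
under eq_bigr do under eq_bigr do rewrite mxE.
by rewrite bigA_distr_bigA; apply: eq_bigr => F _; rewrite big_split.
Qed.

Lemma mulmx_delta_mxE m p q r (A : 'M[K]_(m, p)) (C : 'M[K]_(q, r)) a b x y :
  (A *m delta_mx a b *m C) x y = A x a * C b y.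
Proof.
by rewrite -(mul_delta_mx (0 : 'I_1)) mulmxA -colE -mulmxA -rowE mxE big_ord1 !mxE.
Qed.

Lemma opmx_tens_delta X Y i j :
  opmx (tens X) *m delta_mx i j *m opmx (tens Y) =
  opmx (tens (fun l => X l *m delta_mx (enum_val i l) (enum_val j l) *m Y l)).
Proof.
apply/matrixP => p q; rewrite mulmx_delta_mxE !mxE /tens -big_split.
by apply: eq_bigr => l _; rewrite mulmx_delta_mxE.
Qed.

Lemma parity_addb (phi psi : idx) :
  parity phi (+) parity psi = odd #|[set i | phi i != psi i]|.
Proof.
rewrite /parity -oddD -big_split -sum1_card.
rewrite !(big_morph odd oddD (erefl : odd 0 = false)) [RHS]big_mkcond /=.
apply: eq_bigr => i _; rewrite inE.
by case: (ord2P (phi i)) => ->; case: (ord2P (psi i)) => ->.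
Qed.

Definition parity_preserving (M : 'M[K]_N) : Prop :=
  forall i j, parity (enum_val i) != parity (enum_val j) -> M i j = 0.

Lemma parity_preserving_scalar a : parity_preserving a%:M.
Proof.
move=> i j; rewrite mxE; have [-> | _] := eqVneq i j; last by rewrite mulr0n.
by rewrite eqxx.
Qed.

Lemma parity_preservingD M1 M2 :
  parity_preserving M1 -> parity_preserving M2 -> parity_preserving (M1 + M2).
Proof. by move=> pp1 pp2 i j par_ij; rewrite mxE pp1 ?pp2 ?addr0. Qed.

Lemma parity_preservingZ a M : parity_preserving M -> parity_preserving (a *: M).
Proof. by move=> ppM i j par_ij; rewrite mxE ppM ?mulr0. Qed.

Lemma parity_preserving_tens (y : 'I_n -> 'M[K]_2) (J : {set 'I_n}) :
  ~~ odd #|J| -> (forall l, l \notin J -> is_diag_mx (y l)) ->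
  (forall l, l \in J -> forall k, y l k k = 0) -> parity_preserving (opmx (tens y)).
Proof.
move=> evenJ diag_y hollow_y i j; rewrite mxE; apply: contraNeq => /prodf_neq0 nz_y.
suff EJ : J = [set l | enum_val i l != enum_val j l] by rewrite -negb_add parity_addb -EJ.
apply/setP => l; rewrite inE; have := nz_y l isT.
have [lJ | lNJ] := boolP (l \in J).
  by move=> nz; apply/esym; apply: contraTneq nz => ->; rewrite hollow_y // eqxx.
move=> nz; apply/esym/negbTE; apply: contraTT nz; rewrite negbK => neq.
by move/is_diag_mxP: (diag_y l lNJ) => /(_ _ _ neq) ->; rewrite eqxx.
Qed.

Lemma XstateP rho : Xstate rho <->
  in_L rho /\ exists B : 'I_n -> 'M[K]_2, (forall i, B i \in unitmx) /\
    exists2 C, parity_preserving C & opmx rho *m opmx (tens B) = opmx (tens B) *m C.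
Proof.
have applyE B psi chi : apply_op rho (basis_tensor B psi) chi =
    (opmx rho *m opmx (tens B)) (enum_rank chi) (enum_rank psi).
  by rewrite opmx_mulmxE enum_rankK; apply: eq_bigr => phi _; rewrite opmxE.
have combE B (C : 'M[K]_N) psi chi :
    \sum_phi C (enum_rank phi) (enum_rank psi) * basis_tensor B phi chi =
    (opmx (tens B) *m C) (enum_rank chi) (enum_rank psi).
  by rewrite opmx_mulmxE enum_rankK; apply: eq_bigr => phi _; rewrite mulrC.
split=> -[rhoL [B [Bu XB]]]; split=> //; exists B; split=> //.
  have [c Xc] := fin_all_exists XB.
  exists (\matrix_(i, j) c (enum_val j) (enum_val i)).
    by move=> i j par_ij; rewrite mxE; apply: (proj1 (Xc _)).
  apply/matrixP => p q; rewrite -[p]enum_valK -[q]enum_valK -applyE (proj2 (Xc _)) -combE.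
  by apply: eq_bigr => phi _; rewrite mxE !enum_rankK.
case: XB => C ppC eqC psi; exists (fun phi => C (enum_rank phi) (enum_rank psi)); split.
  by move=> phi par; apply: ppC; rewrite !enum_rankK.
by move=> chi; rewrite applyE combE eqC.
Qed.

End Operators.

Section XStates.
Variables (K : fieldType) (n : nat).
Hypothesis two_neq0 : 2%:R != 0 :> K.
Local Notation idx := (idx n).
Local Notation op := (op K n).
Local Notation N := #|{: idx}|.
Implicit Types (rho : op) (v B : 'I_n -> 'M[K]_2).

Definition X_mx_generator v (M : 'M[K]_N) : Prop := exists2 g, X_generator v g & M = opmx g.

Lemma X_fiberE v rho :
  X_fiber v rho <-> in_span (X_mx_generator v) (opmx rho - (2 ^ n)%:R^-1%:M).
Proof.
have entryE i j : (opmx rho - (2 ^ n)%:R^-1%:M) i j =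
    rho (enum_val i) (enum_val j) - (2 ^ n)%:R^-1 * @idop K n (enum_val i) (enum_val j).
  by rewrite !mxE /idop (inj_eq enum_val_inj) mulr_natr.
split=> [[m [c [g [gen_g rhoE]]]] | [m [c [M [gen_M rhoE]]]]].
  exists m, c, (fun k => opmx (g k)); split=> [k|]; first by exists (g k).
  apply/matrixP => i j; rewrite entryE rhoE addrC addKr summxE.
  by apply: eq_bigr => k _; rewrite !mxE.
have [g gen_g Mg] := fin_all_exists2 gen_M.
exists m, c, g; split=> // phi psi.
move/matrixP: rhoE => /(_ (enum_rank phi) (enum_rank psi)).
rewrite entryE !enum_rankK summxE => /eqP; rewrite subr_eq => /eqP ->; rewrite addrC.
by congr (_ + _); apply: eq_bigr => k _; rewrite Mg !mxE !enum_rankK.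
Qed.

Lemma mxtrace_X_generator v :
  (forall i, sl2 (v i)) -> forall M, X_mx_generator v M -> \tr M = 0.
Proof.
move=> sl_v _ [_ [I [J [x [/set0Pn[i iI] [_ [_ [line_x [transv_x [_ ->]]]]]]]]] ->].
rewrite mxtrace_opmx_tens; apply/eqP/prodf_eq0; exists i => //; apply/eqP.
have [iJ | iNJ] := boolP (i \in J); first by case: (transv_x i iJ).
have [c ->] : in_line (v i) (x i) by apply: line_x; rewrite inE iNJ.
by rewrite mxtraceZ (sl_v i) mulr0.
Qed.

Lemma natr_exp2_neq0 : (2 ^ n)%:R != 0 :> K.
Proof. by rewrite natrX expf_neq0. Qed.

Lemma trace_of_X_span v rho s : (forall i, sl2 (v i)) ->
  in_span (X_mx_generator v) (opmx rho - s%:M) -> trace rho = s *+ 2 ^ n.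
Proof.
move=> sl_v /(mxtrace_in_span (mxtrace_X_generator sl_v)) /eqP.
by rewrite raddfB /= mxtrace_opmx mxtrace_scalar card_idx subr_eq0 => /eqP.
Qed.

Lemma in_L_of_X_fiber v rho : (forall i, sl2 (v i)) -> X_fiber v rho -> in_L rho.
Proof.
move=> sl_v /X_fiberE /(trace_of_X_span sl_v) trace_rho.
by rewrite /in_L trace_rho -[LHS]mulr_natr mulVf // natr_exp2_neq0.
Qed.

Lemma parity_preserving_conj_X_generator v B (l : 'I_n -> K) M :
  (forall i, [/\ l i != 0, B i \in unitmx & invmx (B i) *m v i *m B i = l i *: pauliZ]) ->
  X_mx_generator v M ->
  parity_preserving (opmx (tens (fun i => invmx (B i))) *m M *m opmx (tens B)).
Proof.
move=> diagB [_ [I [J [x [_ [_ [evenJ [line_x [transv_x [one_x ->]]]]]]]]] ->].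
rewrite !opmx_tensM; apply: (parity_preserving_tens evenJ) => i iJ;
  have [l_neq0 Bu vB] := diagB i.
  have [iI | iNI] := boolP (i \in I); last first.
    by rewrite one_x // mulmx1 mulVmx // scalar_mx_is_diag.
  have [c ->] : in_line (v i) (x i) by apply: line_x; rewrite inE iJ iI.
  by rewrite -scalemxAr -scalemxAl vB scalerA -linearZ /= diag_mx_is_diag.
have [sl_x form0] := transv_x i iJ.
apply: diag_eq0_of_mxtrace => //; first by rewrite mxtrace_conj ?mulmxV.
have conjM : invmx (B i) *m v i *m B i *m (invmx (B i) *m x i *m B i) =
    invmx (B i) *m (v i *m x i) *m B i by rewrite !mulmxA mulmxK.
move: form0; rewrite /Defs.formB => /eqP; rewrite mulf_eq0 invr_eq0 (negbTE two_neq0) /=.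
rewrite -(mxtrace_conj (v i *m x i) (mulmxV Bu)) -conjM vB -scalemxAl mxtraceZ.
by rewrite mulf_eq0 (negbTE l_neq0) => /eqP.
Qed.

Lemma Xstate_of_diagonalized_X_fiber v B (l : 'I_n -> K) rho :
  (forall i, sl2 (v i)) ->
  (forall i, [/\ l i != 0, B i \in unitmx & invmx (B i) *m v i *m B i = l i *: pauliZ]) ->
  X_fiber v rho -> Xstate rho.
Proof.
move=> sl_v diagB fib_rho; apply/XstateP; split; first exact: in_L_of_X_fiber fib_rho.
have Bu i : B i \in unitmx by case: (diagB i).
set T := opmx (tens B); set T' := opmx (tens (fun i => invmx (B i))).
have T'T : T' *m T = 1%:M := opmx_tens_invmx Bu.
exists B; split=> //; exists (T' *m opmx rho *m T); last first.
  by rewrite !mulmxA (mulmx1C T'T) mul1mx.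
rewrite -(subrK (2 ^ n)%:R^-1%:M (opmx rho)) mulmxDr mulmxDl mul_mx_scalar -scalemxAl T'T.
rewrite scalemx1; apply: parity_preservingD; last exact: parity_preserving_scalar.
move/X_fiberE: fib_rho; move: (opmx rho - _); apply: in_span_ind => [|a M1 M2 pp1 pp2|].
- by rewrite mulmx0 mul0mx => i j _; rewrite mxE.
- rewrite mulmxDr mulmxDl -scalemxAr -scalemxAl.
  exact/parity_preservingD/pp2/parity_preservingZ.
- by move=> M; apply: parity_preserving_conj_X_generator.
Qed.

Definition basis_line B i : 'M[K]_2 := B i *m pauliZ *m invmx (B i).

Lemma in_Pbreve_basis_line B : (forall i, B i \in unitmx) -> in_Pbreve (basis_line B).
Proof.
move=> Bu i; have BVB : invmx (B i) *m B i = 1%:M by rewrite mulVmx.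
split; first by rewrite /sl2 /basis_line mxtrace_conj // mxtrace_pauliZ.
rewrite /Defs.formB /basis_line !mulmxA mulmxKV // -(mulmxA (B i)) pauliZ_sqr mulmx1.
by rewrite mulmxV // mxtrace1 mulVf //; apply/eqP/oner_neq0.
Qed.

Lemma X_generator_conj_elem_mx B phi psi (F : {ffun 'I_n -> 'I_2}) i0 :
  (forall i, B i \in unitmx) -> parity phi = parity psi ->
  (forall i, phi i != psi i -> F i = ord_max) -> F i0 = ord_max ->
  X_generator (basis_line B)
    (tens (fun i => B i *m elem_mx (phi i) (psi i) (F i) *m invmx (B i))).
Proof.
move=> Bu par offdiagF Fi0.
exists [set i | F i == ord_max], [set i | phi i != psi i].
exists (fun i => B i *m elem_mx (phi i) (psi i) (F i) *m invmx (B i)).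
split; first by apply/set0Pn; exists i0; rewrite inE Fi0.
split; first by apply/subsetP => i; rewrite !inE => /offdiagF ->.
split; first by rewrite -parity_addb par addbb.
split.
  move=> i; rewrite !inE negbK => /andP[/eqP eq_i /eqP Fi].
  by exists 1; rewrite scale1r /elem_mx Fi eq_i eqxx.
split.
  move=> i; rewrite inE => neq_i; rewrite /elem_mx (offdiagF i neq_i) (negbTE neq_i) /=.
  have BVB : invmx (B i) *m B i = 1%:M by rewrite mulVmx.
  split; first by rewrite /sl2 mxtrace_conj // mxtrace2 !delta_mx_hollow // addr0.
  rewrite /Defs.formB /basis_line !mulmxA mulmxKV // -(mulmxA _ pauliZ) mxtrace_conj //.
  by rewrite mxtrace_pauliZ_mul !delta_mx_hollow // subr0 mulr0.
split=> // i; rewrite inE /elem_mx.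
by case: (ord2P (F i)) => -> //= _; rewrite mulmx1 mulmxV.
Qed.

Lemma conj_delta_tens_in_span B phi psi :
  (forall i, B i \in unitmx) -> parity phi = parity psi ->
  in_span (fun M => X_mx_generator (basis_line B) M \/ M = 1%:M)
    (opmx (tens (fun i => B i *m delta_mx (phi i) (psi i) *m invmx (B i)))).
Proof.
move=> Bu par; rewrite (eq_opmx_tens (Y := fun i => \sum_k elem_coef (phi i) (psi i) k *:
    (B i *m elem_mx (phi i) (psi i) k *m invmx (B i)))); last first.
  move=> i; rewrite (delta_mx_decomp two_neq0) mulmx_sumr mulmx_suml.
  by apply: eq_bigr => k _; rewrite -scalemxAr -scalemxAl.
rewrite opmx_tens_sum; apply: in_span_sum => F _.
have [-> | coef_neq0] := eqVneq (\prod_i elem_coef (phi i) (psi i) (F i)) (0 : K).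
  by rewrite scale0r; apply: in_span0.
apply/in_spanZ/in_span_mem.
have offdiagF i : phi i != psi i -> F i = ord_max.
  move=> neq_i; case: (ord2P (F i)) coef_neq0 => // F0.
  by rewrite (bigD1 i) //= F0 /elem_coef eqxx (negbTE neq_i) mul0r mul0r eqxx.
have [/existsP[i0 /eqP Fi0] | /existsPn F0] := boolP [exists i, F i == ord_max].
  by left; exists (tens (fun i => B i *m elem_mx (phi i) (psi i) (F i) *m invmx (B i)));
    first exact: X_generator_conj_elem_mx Fi0.
right; rewrite -opmx_tens1; apply: eq_opmx_tens => i; rewrite /elem_mx.
by case: (ord2P (F i)) (F0 i) => -> //= _; rewrite mulmx1 mulmxV.
Qed.

Lemma pi_image_of_Xstate rho : Xstate rho -> pi_image rho.
Proof.
case/XstateP => rhoL [B [Bu [C ppC rhoC]]].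
have TT' : opmx (tens B) *m opmx (tens (fun i => invmx (B i))) = 1%:M.
  exact/mulmx1C/opmx_tens_invmx.
have rhoE : opmx rho = \sum_i \sum_j C i j *:
    opmx (tens (fun l => B l *m delta_mx (enum_val i l) (enum_val j l) *m invmx (B l))).
  rewrite -[opmx rho]mulmx1 -TT' mulmxA rhoC {1}[C]matrix_sum_delta mulmx_sumr mulmx_suml.
  apply: eq_bigr => i _; rewrite mulmx_sumr mulmx_suml; apply: eq_bigr => j _.
  by rewrite -scalemxAr -scalemxAl opmx_tens_delta.
have : in_span (fun M => X_mx_generator (basis_line B) M \/ M = 1%:M) (opmx rho).
  rewrite rhoE; apply: in_span_sum => i _; apply: in_span_sum => j _.
  have [par | npar] := eqVneq (parity (enum_val i)) (parity (enum_val j)).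
    exact/in_spanZ/conj_delta_tens_in_span.
  by rewrite ppC // scale0r; apply: in_span0.
case/in_span_adjoin => s; rewrite scalemx1 => span_s.
have sl_v i : sl2 (basis_line B i) by case: (in_Pbreve_basis_line Bu i).
exists (basis_line B); split; first exact: in_Pbreve_basis_line.
apply/X_fiberE; suff -> : (2 ^ n)%:R^-1 = s by [].
apply: (mulIf natr_exp2_neq0); rewrite mulVf ?natr_exp2_neq0 // mulr_natr.
by rewrite -(trace_of_X_span sl_v span_s).
Qed.

End XStates.

Lemma pi_image_Xstate (K : numClosedFieldType) n (rho : op K n) :
  pi_image rho <-> Xstate rho.
Proof.
split; last by apply: pi_image_of_Xstate; rewrite pnatr_eq0.
case=> v [Pv fib_rho]; have sl_v i : sl2 (v i) by case: (Pv i).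
have diag_v i : exists lB : K * 'M[K]_2,
    [/\ lB.1 != 0, lB.2 \in unitmx & invmx lB.2 *m v i *m lB.2 = lB.1 *: pauliZ].
  have [_ form_v] := Pv i.
  have [|l [B diag]] := sl2_diagonalizable (sl_v i).
    by apply: contra_not_neq form_v => tr0; rewrite /Defs.formB tr0 mulr0.
  by exists (l, B).
have [lB diagB] := fin_all_exists diag_v.
by apply: (Xstate_of_diagonalized_X_fiber _ sl_v diagB fib_rho); rewrite pnatr_eq0.
Qed.

Theorem lemma4p12 (R : realType) (n : nat) (f : mpoly.mpoly (ncoords n) R[i]) :
  scheme_image_ideal f <-> Xvariety_ideal f.
Proof.
by split=> vanish rho /pi_image_Xstate; apply: vanish.
Qed.
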